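(* Let $P_1,Q_1\in\mathcal{PP}(k)$ and $P_2,Q_2\in\mathcal{PP}(l)$. The following conditions are equivalent: (1) $P_1P_2\leq Q_1Q_2$; (2) $P_1\triangleleft P_2\leq Q_1\triangleleft Q_2$; (3) $P_1\leq Q_1$ and $P_2\leq Q_2$.
   Context: A plane poset is a finite set with two partial orders $\leq_h,\leq_r$ such that two distinct elements are $\leq_h$-comparable iff they are not $\leq_r$-comparable; $\mathcal{PP}(n)$ is the set of isomorphism classes of plane posets with $n$ elements. On a plane poset, $x\leq y$ iff ($x\leq_h y$ or $x\leq_r y$) is a total order (known fact). For $P,Q\in\mathcal{PP}(n)$, $\theta_{P,Q}$ is the increasing bijection $P\to Q$, and $P\leq Q$ means: for all $x,y\in P$, $\theta_{P,Q}(x)\leq_h\theta_{P,Q}(y)$ in $Q$ implies $x\leq_h y$ in $P$. For plane posets $P,Q$: $PQ$ is the plane poset on $P\sqcup Q$ in which $P,Q$ are plane subposets, no element of $P$ is $\leq_h$-comparable with an element of $Q$, and $x<_r y$ for all $x\in P,y\in Q$; $P\triangleleft Q$ is the plane poset on $P\sqcup Q$ in which $P,Q$ are plane subposets, no element of $P$ is $\leq_r$-comparable with an element of $Q$, and $x<_h y$ for all $x\in P,y\in Q$. *)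

From mathcomp Require Import all_boot.
Set Implicit Arguments. Unset Strict Implicit. Unset Printing Implicit Defensive.

Definition partial_order (T : finType) (R : rel T) : Prop :=
  reflexive R /\ antisymmetric R /\ transitive R.

Definition plane_poset (T : finType) (h r : rel T) : Prop :=
  [/\ partial_order h, partial_order r &
      forall x y : T, x != y -> (h x y || h y x) = ~~ (r x y || r y x)].

Definition pp_tot (T : finType) (h r : rel T) : rel T :=
  fun x y => h x y || r x y.

Definition pp_le (T U : finType) (hP rP : rel T) (hQ rQ : rel U) : Prop :=
  exists theta : T -> U,
    [/\ bijective theta,
        (forall x y, pp_tot hP rP x y -> pp_tot hQ rQ (theta x) (theta y)) &
        (forall x y, hQ (theta x) (theta y) -> hP x y)].

(* Product PQ on P ⊔ Q (elements of P are inl, of Q are inr). *)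
Definition prod_h (T U : finType) (h1 : rel T) (h2 : rel U) : rel (T + U) :=
  fun a b => match a, b with
  | inl x, inl y => h1 x y
  | inr x, inr y => h2 x y
  | _, _ => false end.
Definition prod_r (T U : finType) (r1 : rel T) (r2 : rel U) : rel (T + U) :=
  fun a b => match a, b with
  | inl x, inl y => r1 x y
  | inr x, inr y => r2 x y
  | inl _, inr _ => true
  | inr _, inl _ => false end.

Definition tri_h (T U : finType) (h1 : rel T) (h2 : rel U) : rel (T + U) :=
  fun a b => match a, b with
  | inl x, inl y => h1 x y
  | inr x, inr y => h2 x y
  | inl _, inr _ => true
  | inr _, inl _ => false end.
Definition tri_r (T U : finType) (r1 : rel T) (r2 : rel U) : rel (T + U) :=
  fun a b => match a, b with
  | inl x, inl y => r1 x y
  | inr x, inr y => r2 x y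
  | _, _ => false end.

From mathcomp Require Import all_boot.
Set Implicit Arguments. Unset Strict Implicit. Unset Printing Implicit Defensive.

(* Both PQ and P ◁ Q are ordinal sums of P and Q that differ only in whether
   the cross pairs x < y (x in P, y in Q) are h- or r-comparable; in both the
   total order lists P before Q.  An increasing bijection PQ -> P'Q' with
   #|P| = #|P'| can therefore not send an element of P into Q' without sending
   all of Q there as well, which a cardinality count forbids; so it splits as
   a pair of increasing bijections P -> P', Q -> Q', and conversely. *)

Definition is_inr (A B : Type) (a : A + B) : bool := if a is inr _ then true else false.

Lemma is_inlP (A B : Type) (a : A + B) : ~~ is_inr a -> {x | a = inl x}.
Proof. by case: a => [x|//] _; exists x. Qed.

Lemma is_inrP (A B : Type) (a : A + B) : is_inr a -> {z | a = inr z}.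
Proof. by case: a => [//|z] _; exists z. Qed.

Definition sum_map (T1 T2 U1 U2 : Type) (f1 : T1 -> U1) (f2 : T2 -> U2)
  (a : T1 + T2) : U1 + U2 :=
  match a with inl x => inl (f1 x) | inr z => inr (f2 z) end.

Lemma sum_map_bij (T1 T2 U1 U2 : Type) (f1 : T1 -> U1) (f2 : T2 -> U2) :
  bijective f1 -> bijective f2 -> bijective (sum_map f1 f2).
Proof.
case=> g1 f1K g1K [g2 f2K g2K].
by exists (sum_map g1 g2) => -[x|z] /=; rewrite ?f1K ?g1K ?f2K ?g2K.
Qed.

Definition sum_rel (T U : Type) (R1 : rel T) (R2 : rel U) (b : bool) : rel (T + U) :=
  fun a c => match a, c with
  | inl x, inl y => R1 x y
  | inr x, inr y => R2 x y
  | inl _, inr _ => b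
  | inr _, inl _ => false end.

Lemma pp_tot_sum_rel (T U : finType) (h1 r1 : rel T) (h2 r2 : rel U) (bh br : bool) :
  pp_tot (sum_rel h1 h2 bh) (sum_rel r1 r2 br)
  =2 sum_rel (pp_tot h1 r1) (pp_tot h2 r2) (bh || br).
Proof. by case=> ? []. Qed.

Lemma card_inr_set (A B : finType) : #|[set u : A + B | is_inr u]| = #|B|.
Proof.
have -> : [set u : A + B | is_inr u] = inr @: [set: B].
  by apply/setP => -[x|z]; rewrite !inE /=; [apply/esym/imsetP => -[] | rewrite imset_f].
by rewrite card_imset ?cardsT // => ? ? [].
Qed.

Lemma card_inl_set (A B : finType) : #|[set u : A + B | ~~ is_inr u]| = #|A|.
Proof.
have -> : [set u : A + B | ~~ is_inr u] = inl @: [set: A].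
  by apply/setP => -[x|z]; rewrite !inE /=; [rewrite imset_f | apply/esym/imsetP => -[]].
by rewrite card_imset ?cardsT // => ? ? [].
Qed.

Lemma card_le_preimset (T U : finType) (f : T -> U) (X : {set T}) (S : {set U}) :
  bijective f -> X \subset f @^-1: S -> #|X| <= #|S|.
Proof. by move=> f_bij /subset_leq_card; rewrite on_card_preimset //; apply: onW_bij. Qed.

Section BlockPreservingBijection.

Variables (T1 T2 U1 U2 : finType) (theta : T1 + T2 -> U1 + U2).
Hypotheses (theta_bij : bijective theta)
  (card1 : #|T1| = #|U1|) (card2 : #|T2| = #|U2|)
  (theta_blocks : forall x z, is_inr (theta (inl x)) -> is_inr (theta (inr z))).

Lemma bij_sum_inl x : ~~ is_inr (theta (inl x)).
Proof.
apply/negP => xR.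
have : #|inl x |: inr @: [set: T2]| <= #|[set u : U1 + U2 | is_inr u]|.
  apply: (card_le_preimset theta_bij); apply/subsetP => a; rewrite !inE.
  by case/predU1P => [-> //|/imsetP[z _ ->]]; apply: theta_blocks xR.
rewrite card_inr_set cardsU1 card_imset ?cardsT -?card2; last by move=> ? ? [].
have /negPf-> : inl x \notin inr @: [set: T2] by apply/imsetP => -[].
by rewrite ltnn.
Qed.

Lemma bij_sum_inr z : is_inr (theta (inr z)).
Proof.
apply/negPn/negP => zL.
have : #|inr z |: inl @: [set: T1]| <= #|[set u : U1 + U2 | ~~ is_inr u]|.
  apply: (card_le_preimset theta_bij); apply/subsetP => a; rewrite !inE.
  case/predU1P => [-> //|/imsetP[x _ ->]].
  by apply: contra zL => /theta_blocks; apply.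
rewrite card_inl_set cardsU1 card_imset ?cardsT -?card1; last by move=> ? ? [].
have /negPf-> : inr z \notin inl @: [set: T1] by apply/imsetP => -[].
by rewrite ltnn.
Qed.

Lemma bij_sum_split :
  exists t1 t2, [/\ bijective t1, bijective t2 & theta =1 sum_map t1 t2].
Proof.
pose t1 x := sval (is_inlP (bij_sum_inl x)).
pose t2 z := sval (is_inrP (bij_sum_inr z)).
have t1E x : theta (inl x) = inl (t1 x) := svalP (is_inlP (bij_sum_inl x)).
have t2E z : theta (inr z) = inr (t2 z) := svalP (is_inrP (bij_sum_inr z)).
have theta_inj := bij_inj theta_bij.
exists t1, t2; split; last by case=> [x|z] /=.
- apply: inj_card_bij; last by rewrite card1.
  move=> x y e; have := theta_inj (inl x) (inl y).
  by rewrite !t1E e => /(_ erefl) [].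
- apply: inj_card_bij; last by rewrite card2.
  move=> x y e; have := theta_inj (inr x) (inr y).
  by rewrite !t2E e => /(_ erefl) [].
Qed.

End BlockPreservingBijection.

Section SumRelOrder.

Variables (T1 T2 U1 U2 : finType).
Variables (h1 r1 : rel T1) (h2 r2 : rel T2) (g1 s1 : rel U1) (g2 s2 : rel U2).
Variables (bh br : bool).
Hypothesis cross_before : bh || br.

Lemma pp_le_sum_rel_split : #|T1| = #|U1| -> #|T2| = #|U2| ->
  pp_le (sum_rel h1 h2 bh) (sum_rel r1 r2 br) (sum_rel g1 g2 bh) (sum_rel s1 s2 br) ->
  pp_le h1 r1 g1 s1 /\ pp_le h2 r2 g2 s2.
Proof.
move=> card1 card2 [theta [theta_bij theta_tot theta_h]].
have theta_blocks x z : is_inr (theta (inl x)) -> is_inr (theta (inr z)).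
  have := theta_tot (inl x) (inr z); rewrite !pp_tot_sum_rel /= cross_before.
  by case: (theta (inl x)) => // ?; case: (theta (inr z)) => // ? /(_ isT).
have [t1 [t2 [t1_bij t2_bij thetaE]]] := bij_sum_split theta_bij card1 card2 theta_blocks.
split; [exists t1 | exists t2]; split=> // x y.
- by have := theta_tot (inl x) (inl y); rewrite !thetaE !pp_tot_sum_rel.
- by have := theta_h (inl x) (inl y); rewrite !thetaE.
- by have := theta_tot (inr x) (inr y); rewrite !thetaE !pp_tot_sum_rel.
- by have := theta_h (inr x) (inr y); rewrite !thetaE.
Qed.

Lemma pp_le_sum_rel_join :
  pp_le h1 r1 g1 s1 -> pp_le h2 r2 g2 s2 ->
  pp_le (sum_rel h1 h2 bh) (sum_rel r1 r2 br) (sum_rel g1 g2 bh) (sum_rel s1 s2 br).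
Proof.
move=> [t1 [t1_bij t1_tot t1_h]] [t2 [t2_bij t2_tot t2_h]].
exists (sum_map t1 t2); split; first exact: sum_map_bij.
- by case=> x [] y; rewrite !pp_tot_sum_rel /= ?cross_before //; [apply: t1_tot | apply: t2_tot].
- by case=> x [] y //=; [apply: t1_h | apply: t2_h].
Qed.

Lemma pp_le_sum_rel : #|T1| = #|U1| -> #|T2| = #|U2| ->
  pp_le (sum_rel h1 h2 bh) (sum_rel r1 r2 br) (sum_rel g1 g2 bh) (sum_rel s1 s2 br)
  <-> pp_le h1 r1 g1 s1 /\ pp_le h2 r2 g2 s2.
Proof.
move=> card1 card2; split; first exact: pp_le_sum_rel_split.
by case; apply: pp_le_sum_rel_join.
Qed.

End SumRelOrder.

Theorem proposition16 (k l : nat)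
  (TP1 TQ1 TP2 TQ2 : finType)
  (hP1 rP1 : rel TP1) (hQ1 rQ1 : rel TQ1)
  (hP2 rP2 : rel TP2) (hQ2 rQ2 : rel TQ2) :
  plane_poset hP1 rP1 -> plane_poset hQ1 rQ1 ->
  plane_poset hP2 rP2 -> plane_poset hQ2 rQ2 ->
  #|TP1| = k -> #|TQ1| = k -> #|TP2| = l -> #|TQ2| = l ->
  [/\ (pp_le (prod_h hP1 hP2) (prod_r rP1 rP2) (prod_h hQ1 hQ2) (prod_r rQ1 rQ2)
       <-> pp_le (tri_h hP1 hP2) (tri_r rP1 rP2) (tri_h hQ1 hQ2) (tri_r rQ1 rQ2)),
      (pp_le (tri_h hP1 hP2) (tri_r rP1 rP2) (tri_h hQ1 hQ2) (tri_r rQ1 rQ2)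
       <-> pp_le hP1 rP1 hQ1 rQ1 /\ pp_le hP2 rP2 hQ2 rQ2) &
      (pp_le (prod_h hP1 hP2) (prod_r rP1 rP2) (prod_h hQ1 hQ2) (prod_r rQ1 rQ2)
       <-> pp_le hP1 rP1 hQ1 rQ1 /\ pp_le hP2 rP2 hQ2 rQ2)].
Proof.
move=> _ _ _ _ cardP1 cardQ1 cardP2 cardQ2.
have card1 : #|TP1| = #|TQ1| by rewrite cardP1 cardQ1.
have card2 : #|TP2| = #|TQ2| by rewrite cardP2 cardQ2.
(* prod_h, prod_r, tri_h, tri_r are convertible to sum_rel with crossing values
   false, true, true, false respectively. *)
have tri := @pp_le_sum_rel _ _ _ _ hP1 rP1 hP2 rP2 hQ1 rQ1 hQ2 rQ2 true false isT card1 card2.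
have prod := @pp_le_sum_rel _ _ _ _ hP1 rP1 hP2 rP2 hQ1 rQ1 hQ2 rQ2 false true isT card1 card2.
split=> //; split=> [/prod/tri | /tri/prod] //.
Qed.
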